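(* (i) Let $G=(V,E)$ be a complete graph on $n\ge 2$ vertices with distinct positive edge weights, and let $k\in\{1,\dots,n-1\}$. Then the graph $(V,M_k(G))$ is $k$-constructible. (ii) Let $G=(V,E)$ be a $k$-constructible graph. Then there exist distinct positive edge weights on the complete graph $\widetilde G=(V,\widetilde E)$ on vertex set $V$ such that $E\subseteq M_k(\widetilde G)$.
   Context: For a complete graph $H=(V,F)$ on $n$ vertices with distinct positive edge weights and $k\in\{1,\dots,n-1\}$, $M_k(H)=\bigcup_{X\subseteq V,\,|X|=k-1}\mathrm{MST}(H[V\setminus X])$, where $H[V\setminus X]$ is the induced weighted subgraph and $\mathrm{MST}$ denotes the edge set of its (unique) minimum spanning tree. A graph $G=(V,E)$ is called $k$-constructible if there is an ordering $e_1,\dots,e_m$ of $E$ such that for every $i\in\{1,\dots,m\}$ the graph $(V,\{e_1,\dots,e_{i-1}\})$ contains at most $k-1$ internally vertex-disjoint paths between the two endpoints of $e_i$. *)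

From HB Require Import structures.
From mathcomp Require Import all_boot all_order all_algebra.
Set Implicit Arguments. Unset Strict Implicit. Unset Printing Implicit Defensive.
Import Order.TTheory GRing.Theory Num.Theory.

Section Defs.
Variable V : finType.

Definition is_edge (e : {set V}) : bool := #|e| == 2.

Definition simple_graph (E : {set {set V}}) : bool := [forall e in E, is_edge e].

Definition adj (F : {set {set V}}) : rel V := fun x y => [set x; y] \in F.

(* T is a spanning tree of the complete graph on the vertex set S:
   its edges are 2-subsets of S, (S,T) is connected, and (S,T) is acyclic
   (every edge of T is a bridge). *)
Definition spanning_tree (S : {set V}) (T : {set {set V}}) : bool :=
  [&& [forall e in T, is_edge e && (e \subset S)],
      [forall u in S, forall v in S, connect (adj T) u v] &
      [forall e in T, forall u, forall v,
         (e == [set u; v]) ==> ~~ connect (adj (T :\ e)) u v]].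

Variable R : realFieldType.

Definition weight (w : {set V} -> R) (T : {set {set V}}) : R :=
  (\sum_(e in T) w e)%R.

Definition is_MST (w : {set V} -> R) (S : {set V}) (T : {set {set V}}) : bool :=
  spanning_tree S T &&
  [forall T' : {set {set V}}, spanning_tree S T' ==> (weight w T <= weight w T')%R].

Definition Mk (w : {set V} -> R) (k : nat) : {set {set V}} :=
  \bigcup_(X : {set V} | #|X| == k.-1) \bigcup_(T | is_MST w (~: X) T) T.

Definition good_weights (w : {set V} -> R) : Prop :=
  (forall e, is_edge e -> (0 < w e)%R) /\
  (forall e f, is_edge e -> is_edge f -> w e = w f -> e = f).

(* A u-v path in the graph (V,F), given as its vertex sequence u :: r. *)
Definition uv_path (F : {set {set V}}) (u v : V) (r : seq V) : bool :=
  [&& path (adj F) u r, last u r == v & uniq (u :: r)].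

Definition interior (v : V) (r : seq V) : seq V := filter (predC1 v) r.

Definition disjoint_paths (F : {set {set V}}) (u v : V) (rs : seq (seq V)) : Prop :=
  uniq rs /\ all (uv_path F u v) rs /\
  pairwise (fun r1 r2 => [disjoint interior v r1 & interior v r2]) rs.

Definition at_most_disjoint_paths (F : {set {set V}}) (u v : V) (m : nat) : Prop :=
  forall rs, disjoint_paths F u v rs -> size rs <= m.

Definition k_constructible (k : nat) (E : {set {set V}}) : Prop :=
  exists s : seq {set V},
    uniq s /\ s =i E /\
    forall i, i < size s -> forall u v : V,
      nth set0 s i = [set u; v] ->
      at_most_disjoint_paths [set x in take i s] u v k.-1.

End Defs.

From mathcomp Require Import all_boot all_order all_algebra.
From mathcomp Require Import zify.
Set Implicit Arguments. Unset Strict Implicit. Unset Printing Implicit Defensive.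
Import Order.TTheory GRing.Theory Num.Theory.

(* (i) List M_k by increasing weight.  Let [u v] be an edge of M_k lying in the
   MST T of H - X, |X| = k - 1.  Of k internally disjoint u-v paths through
   earlier, hence lighter, edges one avoids X; it leaves the component of u in
   T - uv through a lighter edge of H - X, and exchanging the two edges would
   give a lighter spanning tree.
   (ii) Weight the edges by their position in a construction order, and the
   non-edges above them.  When [u v] is added, there are at most k - 1 disjoint
   u-v paths among earlier edges, so by Menger's theorem at most k - 1
   vertices separate u from v; complete them to a set X of k - 1 vertices
   avoiding u and v.  The path from u to v in the MST of H - X leaves the part
   reachable from u through an edge that comes after [u v] or is a non-edge,
   so it is heavier, and the same exchange shows [u v] is in the MST.
   Menger's theorem is proved in its set form, by induction on the number of
   edges. *)

Lemma disjointP (T : finType) (A B : {pred T}) :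
  reflect (forall z, z \in A -> z \in B -> False) [disjoint A & B].
Proof.
apply: (iffP pred0P) => [H z zA zB | H z]; first by have := H z; rewrite /= zA zB.
by apply/negbTE/andP => [[]]; apply: H.
Qed.

Lemma sub_in_count (T : eqType) (a1 a2 : pred T) (s : seq T) :
  {in s, subpred a1 a2} -> count a1 s <= count a2 s.
Proof.
elim: s => //= x s IH H; apply: leq_add.
  by case h: (a1 x) => //; rewrite (H x (mem_head _ _) h).
by apply: IH => y ys; apply: H; rewrite inE ys orbT.
Qed.

Section Connectivity.
Variable V : finType.
Implicit Types (e : rel V) (P : pred V).

Lemma connect_subrel e e' : subrel e e' -> subrel (connect e) (connect e').
Proof. by move=> H; apply: connect_sub => x y /H; apply: connect1. Qed.

Lemma connect_stable e P x y :
  (forall a b, P a -> e a b -> P b) -> P x -> connect e x y -> P y.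
Proof.
move=> H Px /connectP[p pth ->]; elim: p x Px pth => //= z p IH x Px /andP[exz pth].
exact: IH (H _ _ Px exz) pth.
Qed.

Lemma connect_isolated e z a : (forall c, ~~ e z c) -> connect e z a -> a = z.
Proof.
move=> H /connectP[[|c p] /= pth ->] //.
by case/andP: pth => h; rewrite (negbTE (H c)) in h.
Qed.

Lemma connect_uniq_path e x y : connect e x y ->
  exists p, [/\ path e x p, uniq (x :: p) & last x p = y].
Proof. by move/connectP=> [p pth ->]; case: (shortenP pth) => p' h1 h2 _; exists p'. Qed.

Lemma path_has_pred e x p z : path e x p -> z \in p -> exists c, e c z.
Proof.
elim: p x => //= y p IH x /andP[exy pth]; rewrite inE => /orP[/eqP -> | zp].
  by exists x.
exact: IH pth zp.
Qed.

Lemma connect_in_component e a c : connect e a c ->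
  connect (fun x y => [&& e x y, connect e a x & connect e a y]) a c.
Proof.
move=> /connectP[p pth ->]; apply/connectP; exists p => //.
have H1 : all [pred z | connect e a z] (a :: p).
  by apply/allP => z zp /=; exact: (path_connect pth zp).
apply: (sub_in_path _ H1 pth) => x y; rewrite !inE => Px Py exy.
by rewrite exy Px Py.
Qed.

Lemma path_exit e P x p : path e x p -> P x -> ~~ P (last x p) ->
  exists a b, [/\ e a b, P a & ~~ P b].
Proof.
elim: p x => [|y p IH] x /=; first by move=> _ ->.
case/andP => exy pth Px; case Py: (P y); first by move=> /(IH y pth Py).
by move=> _; exists x, y; rewrite Py.
Qed.

Lemma uniq_path_exit e P x p : path e x p -> uniq (x :: p) -> P x ->
  ~~ P (last x p) ->
  exists a b, [/\ e a b, P a, ~~ P b, a \in x :: p & b \in p] /\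
    exists q1 q2, [/\ path e x q1, last x q1 = a & b \notin x :: q1] /\
      [/\ path e b q2, last b q2 = last x p & a \notin b :: q2].
Proof.
elim: p x => [|y p IH] x /=; first by move=> _ _ ->.
case/andP => exy pth /andP[xyp uyp] Px; case Py: (P y).
  move=> /(IH y pth uyp Py) [a [b [[eab Pa Pb ap bp] [q1 [q2 [[h1 h2 h3] h4]]]]]].
  exists a, b; split; first by split; rewrite // inE ?ap ?bp orbT.
  exists (y :: q1), q2; split => //; split => //=; first by rewrite exy.
  rewrite inE negb_or h3 andbT; apply: contraNneq xyp => <-.
  by rewrite inE bp orbT.
move=> _; exists x, y; split; first by split; rewrite ?Py // inE eqxx.
exists [::], p; split; split => //=.
by rewrite inE; apply: contraNneq xyp => ->; rewrite inE eqxx.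
Qed.

End Connectivity.

Section Graphs.
Variable V : finType.
Implicit Types (F : {set {set V}}).

Lemma adj_sym F : symmetric (adj F).
Proof. by move=> x y; rewrite /adj setUC. Qed.

Lemma connect_adj_sym F : connect_sym (adj F).
Proof. exact: sym_connect_sym (adj_sym F). Qed.

Lemma adj_subset F F' : F \subset F' -> subrel (adj F) (adj F').
Proof. by move=> /subsetP H x y; rewrite /adj => /H. Qed.

Lemma connect_adj_subset F F' : F \subset F' ->
  subrel (connect (adj F)) (connect (adj F')).
Proof. by move=> H; apply/connect_subrel/adj_subset. Qed.

Lemma set2_inj (a b c d : V) : a != b -> [set a; b] = [set c; d] ->
  (c = a /\ d = b) \/ (c = b /\ d = a).
Proof.
move=> ab E.
have : c \in [set a; b] by rewrite E set21.
have : d \in [set a; b] by rewrite E set22.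
have : a \in [set c; d] by rewrite -E set21.
have : b \in [set c; d] by rewrite -E set22.
rewrite !inE => /orP[]/eqP-> /orP[]/eqP-> /orP[]/eqP ? /orP[]/eqP ?; subst;
  rewrite ?eqxx in ab; auto.
Qed.

Lemma set2C (a b : V) : [set a; b] = [set b; a].
Proof. exact: setUC. Qed.

Lemma edge_neq (a b : V) : is_edge [set a; b] -> a != b.
Proof. by rewrite /is_edge cards2; case: (a != b). Qed.

Lemma connect_setU1_edge F a b z z' : a != b ->
  connect (adj ([set a; b] |: F)) z z' ->
  connect (adj F) z z' \/ (connect (adj F) z a /\ connect (adj F) b z') \/
  (connect (adj F) z b /\ connect (adj F) a z').
Proof.
move=> ab /connectP[p pth ->]; elim: p z pth => [|y p IH] z /=.
  by move=> _; left; apply: connect0.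
case/andP => hzy /IH {}IH.
rewrite /adj in_setU1 in hzy; case/orP: hzy => [/eqP E | hF].
  have [[? ?]|[? ?]] := set2_inj ab (esym E); subst z y.
    by case: IH => [H|[[H1 H2]|[H1 H2]]]; [right; left | right; left | left].
  by case: IH => [H|[[H1 H2]|[H1 H2]]]; [right; right | left | right; right].
have hc : connect (adj F) z y by apply: connect1.
case: IH => [H|[[H1 H2]|[H1 H2]]].
- by left; apply: connect_trans hc H.
- by right; left; split => //; apply: connect_trans hc H1.
- by right; right; split => //; apply: connect_trans hc H1.
Qed.

Lemma path_setD1_edge F a b x q : b \notin x :: q -> path (adj F) x q ->
  path (adj (F :\ [set a; b])) x q.
Proof.
move=> bq; apply: (@sub_in_path _ (predC1 b)); last first.
  by apply/allP => z zq /=; apply: contraNneq bq => <-.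
move=> c d /= cb db; rewrite /adj !inE => ->; rewrite andbT.
apply/eqP => E; have : b \in [set c; d] by rewrite E set22.
by rewrite !inE ![b == _]eq_sym (negbTE cb) (negbTE db).
Qed.

End Graphs.

Section SpanningTrees.
Variable V : finType.
Implicit Types (F T : {set {set V}}) (S X : {set V}).

Lemma spanning_treeP S T : spanning_tree S T <->
  [/\ (forall e, e \in T -> is_edge e /\ e \subset S),
      (forall u v, u \in S -> v \in S -> connect (adj T) u v) &
      (forall e u v, e \in T -> e = [set u; v] -> ~~ connect (adj (T :\ e)) u v)].
Proof.
split.
  case/and3P => /forallP H1 /forallP H2 /forallP H3; split.
  - by move=> e eT; have /implyP/(_ eT)/andP[] := H1 e.
  - by move=> u v uS vS; have /implyP/(_ uS)/forallP/(_ v)/implyP/(_ vS) := H2 u.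
  - move=> e u v eT E; have /implyP/(_ eT)/forallP/(_ u)/forallP/(_ v)/implyP := H3 e.
    by apply; rewrite E.
case=> H1 H2 H3; apply/and3P; split.
- by apply/forallP => e; apply/implyP => eT; have [-> ->] := H1 e eT.
- by apply/forallP => u; apply/implyP => uS; apply/forallP => v; apply/implyP; apply: H2.
- apply/forallP => e; apply/implyP => eT; apply/forallP => u; apply/forallP => v.
  by apply/implyP => /eqP; apply: H3.
Qed.

Lemma spanning_tree_edge S T e : spanning_tree S T -> e \in T ->
  exists a b, [/\ a != b, e = [set a; b], a \in S & b \in S].
Proof.
case/spanning_treeP => H1 _ _ /H1[/cards2P[a [b [ab ->]]] eS].
by exists a, b; split => //; apply: (subsetP eS); rewrite !inE eqxx ?orbT.
Qed.

Lemma spanning_tree_exchange S T g x y : spanning_tree S T -> g \in T ->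
  x != y -> x \in S -> y \in S -> ~~ connect (adj (T :\ g)) x y ->
  spanning_tree S ([set x; y] |: (T :\ g)).
Proof.
move=> st gT xy xS yS nxy; have [H1 H2 H3] := (spanning_treeP _ _).1 st.
set T0 := T :\ g.
have [a [b [ab gE _ _]]] := spanning_tree_edge st gT.
have TE : T = [set a; b] |: T0 by rewrite /T0 -gE setD1K.
have fT0 : [set x; y] \notin T0.
  by apply: contra nxy => H; apply: connect1; rewrite /adj.
have T0T' : T0 \subset [set x; y] |: T0 by apply: subsetU1.
have lift := connect_adj_subset T0T'.
have cxy : connect (adj ([set x; y] |: T0)) x y.
  by apply: connect1; rewrite /adj setU11.
have cab : connect (adj ([set x; y] |: T0)) a b.
  have : connect (adj ([set a; b] |: T0)) x y by rewrite -TE; apply: H2.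
  case/(connect_setU1_edge ab) => [H|[[h1 h2]|[h1 h2]]]; first by rewrite H in nxy.
  - rewrite connect_adj_sym in h1; rewrite connect_adj_sym in h2.
    exact: connect_trans (lift _ _ h1) (connect_trans cxy (lift _ _ h2)).
  - apply: connect_trans (lift _ _ h2) (connect_trans _ (lift _ _ h1)).
    by rewrite connect_adj_sym.
apply/spanning_treeP; split.
- move=> e; rewrite in_setU1 => /orP[/eqP -> | /setD1P[_ /H1] //].
  by rewrite /is_edge cards2 xy subUset !sub1set xS yS.
- move=> u v uS vS.
  have : connect (adj ([set a; b] |: T0)) u v by rewrite -TE; apply: H2.
  case/(connect_setU1_edge ab) => [H|[[h1 h2]|[h1 h2]]]; first exact: lift.
  + exact: connect_trans (lift _ _ h1) (connect_trans cab (lift _ _ h2)).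
  + apply: connect_trans (lift _ _ h1) (connect_trans _ (lift _ _ h2)).
    by rewrite connect_adj_sym.
- move=> e u v; rewrite in_setU1 => /orP[/eqP -> | eT0] E.
    rewrite setU1K //; have [[? ?]|[? ?]] := set2_inj xy E; subst u v => //.
    by rewrite connect_adj_sym.
  have efE : e != [set x; y] by apply: contraNneq fT0 => <-.
  have -> : ([set x; y] |: T0) :\ e = [set x; y] |: (T0 :\ e).
    by apply/setP => z; rewrite !inE; case: (z =P e) => // ->; rewrite (negbTE efE).
  have eT : e \in T by move: eT0; rewrite /T0 !inE => /andP[].
  have T0e : T0 :\ e \subset T0 by apply: subD1set.
  have low := connect_adj_subset T0e.
  have pq : connect (adj T0) u v by apply: connect1; rewrite /adj -E.
  apply/negP => /(connect_setU1_edge xy) [H|[[h1 h2]|[h1 h2]]].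
  + have sub : T0 :\ e \subset T :\ e by apply: setSD; apply: subD1set.
    by have := H3 e u v eT E; rewrite (connect_adj_subset sub H).
  + move/negP: nxy; apply; rewrite connect_adj_sym in h1; rewrite connect_adj_sym in h2.
    exact: connect_trans (low _ _ h1) (connect_trans pq (low _ _ h2)).
  + move/negP: nxy; apply; rewrite connect_adj_sym in pq.
    exact: connect_trans (low _ _ h2) (connect_trans pq (low _ _ h1)).
Qed.

Lemma spanning_tree_path_bridge S T a b u v q1 q2 :
  spanning_tree S T -> [set a; b] \in T ->
  path (adj T) u q1 -> last u q1 = a -> b \notin u :: q1 ->
  path (adj T) b q2 -> last b q2 = v -> a \notin b :: q2 ->
  ~~ connect (adj (T :\ [set a; b])) u v.
Proof.
move=> /spanning_treeP[_ _ H3] abT pu lu bu pv lv av.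
apply/negP => cuv; move/negP: (H3 _ a b abT erefl); apply.
have cua : connect (adj (T :\ [set a; b])) u a.
  by apply/connectP; exists q1; [apply: path_setD1_edge | rewrite lu].
have cbv : connect (adj (T :\ [set a; b])) b v.
  by apply/connectP; exists q2; [rewrite set2C; apply: path_setD1_edge | rewrite lv].
rewrite connect_adj_sym in cua; rewrite connect_adj_sym in cbv.
exact: connect_trans cua (connect_trans cuv cbv).
Qed.

Lemma star_spanning_tree S c : c \in S ->
  spanning_tree S [set [set c; z] | z in S :\ c].
Proof.
move=> cS; set T := [set _ | _ in _].
have adjc z : z \in S -> connect (adj T) c z.
  move=> zS; case: (z =P c) => [->|/eqP zc]; first exact: connect0.
  by apply: connect1; rewrite /adj; apply/imsetP; exists z => //; rewrite !inE zc.
apply/spanning_treeP; split.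
- move=> e /imsetP[z]; rewrite !inE => /andP[zc zS] ->.
  by rewrite /is_edge cards2 [c == _]eq_sym zc subUset !sub1set cS zS.
- by move=> u v uS vS; apply: connect_trans (adjc v vS); rewrite connect_adj_sym adjc.
- move=> e u v /imsetP[z]; rewrite !inE => /andP[zc zS] -> E.
  (* the leaf [z] has no neighbour once its edge is removed *)
  have iso w : ~~ adj (T :\ [set c; z]) z w.
    rewrite /adj !inE; apply/negP => /andP[ne /imsetP[z']].
    rewrite !inE => /andP[z'c _] E'.
    have : z \in [set c; z'] by rewrite -E' set21.
    rewrite !inE (negbTE zc) /= => /eqP zz'; subst z'.
    by rewrite E' set2C eqxx in ne.
  have cz : c != z by rewrite eq_sym.
  have [[? ?]|[? ?]] := set2_inj cz E; subst u v; apply/negP.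
    by rewrite connect_adj_sym => /(connect_isolated iso) E1; rewrite E1 eqxx in cz.
  by move=> /(connect_isolated iso) E1; rewrite E1 eqxx in cz.
Qed.

Variable R : realFieldType.
Variable w : {set V} -> R.

Lemma MST_exists S c : c \in S -> exists T, is_MST w S T.
Proof.
move=> cS; case: (arg_minP (weight w) (star_spanning_tree cS)) => T HT Hmin.
by exists T; rewrite /is_MST HT; apply/forallP => T'; apply/implyP; apply: Hmin.
Qed.

Lemma is_MSTP S T : is_MST w S T ->
  spanning_tree S T /\ forall T', spanning_tree S T' -> (weight w T <= weight w T')%R.
Proof. by case/andP => -> /forallP H; split => // T'; exact/implyP/H. Qed.

Lemma weight_exchange T g f : g \in T -> f \notin T :\ g ->
  weight w (f |: (T :\ g)) = (w f + weight w T - w g)%R.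
Proof.
move=> gT fT; rewrite /weight big_setU1 //= (big_setD1 _ gT) /=.
by rewrite [(w g + _)%R]addrC addrA addrK.
Qed.

Lemma MST_edge_le_cut S T f x y : is_MST w S T -> f \in T ->
  x != y -> x \in S -> y \in S -> ~~ connect (adj (T :\ f)) x y ->
  (w f <= w [set x; y])%R.
Proof.
move=> /is_MSTP[st Tmin] fT xy xS yS nxy.
have xyT : [set x; y] \notin T :\ f by apply: contra nxy => h; apply: connect1.
have := Tmin _ (spanning_tree_exchange st fT xy xS yS nxy).
by rewrite weight_exchange // addrAC lerDr subr_ge0.
Qed.

End SpanningTrees.

Section MkConstructible.
Variable V : finType.
Variable R : realFieldType.
Implicit Types (F T : {set {set V}}) (X : {set V}).

(* Interiors are pairwise disjoint, so each vertex of [X] lies on at most one. *)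
Lemma count_interior_meets_le X v (rs : seq (seq V)) :
  pairwise (fun r1 r2 => [disjoint interior v r1 & interior v r2]) rs ->
  count (fun r => has (mem X) (interior v r)) rs <= #|X|.
Proof.
elim: rs X => [|r rs IH] X //= /andP[/allP hall hpw].
case: (boolP (has (mem X) (interior v r))) => [/hasP[x0 x0r x0X] | _]; last first.
  by rewrite add0n; apply: IH.
have x0X' : x0 \in X by [].
rewrite add1n (cardsD1 x0 X) x0X' add1n ltnS; apply: leq_trans (IH _ hpw).
apply: sub_in_count => r' r'rs /hasP[z zr' zX]; apply/hasP; exists z => //.
have zX' : z \in X by [].
rewrite !inE zX' andbT; apply: contraTneq zr' => ->.
by apply/negP => h; move/disjointP: (hall r' r'rs) => /(_ x0 x0r h).
Qed.

Lemma disjoint_paths_avoid F u v rs X : disjoint_paths F u v rs -> #|X| < size rs ->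
  exists2 r, r \in rs & ~~ has (mem X) (interior v r).
Proof.
case=> _ [_ hpw] big; apply/hasP; rewrite has_count.
have h1 := count_interior_meets_le X hpw.
have h2 := count_predC (fun r => has (mem X) (interior v r)) rs.
rewrite (eq_count (a2 := predC (fun r => has (mem X) (interior v r)))) //.
clear -h1 h2 big; lia.
Qed.

Lemma sorted_take_lt (w : {set V} -> R) (s : seq {set V}) i f :
  sorted (fun e f => w e <= w f)%R s -> uniq s -> {in s &, injective w} ->
  i < size s -> f \in take i s -> (w f < w (nth set0 s i))%R.
Proof.
move=> ss us winj isz fi.
have jlt : index f (take i s) < i by rewrite -{2}(size_takel (ltnW isz)) index_mem.
set j := index f (take i s) in jlt.
have fj : nth set0 s j = f by rewrite -(nth_take set0 jlt) nth_index.
have js : j < size s := ltn_trans jlt isz.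
have fs : f \in s by rewrite -fj mem_nth.
have le_fe : (w f <= w (nth set0 s i))%R.
  have tr : transitive (fun e f => (w e <= w f)%R) by move=> ? ? ?; apply: le_trans.
  by rewrite -fj; apply: (sorted_ltn_nth tr set0 ss); rewrite ?inE.
rewrite lt_neqAle le_fe andbT; apply: contraTneq jlt => /winj.
rewrite mem_nth // => /(_ fs isT) fi'.
by rewrite -fj in fi'; move/eqP: fi'; rewrite nth_uniq // => /eqP->; rewrite ltnn.
Qed.

Variable w : {set V} -> R.
Hypothesis wgood : good_weights w.
Variable k : nat.

Lemma Mk_edge e : e \in Mk w k -> is_edge e.
Proof.
case/bigcupP=> X _ /bigcupP[T /is_MSTP[st _] eT].
by have [H1 _ _] := (spanning_treeP _ _).1 st; have [] := H1 e eT.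
Qed.

Lemma path_vertices_avoid X u v r : u \in ~: X -> v \in ~: X ->
  ~~ has (mem X) (interior v r) -> {subset u :: r <= ~: X}.
Proof.
move=> uX vX nh z; rewrite inE => /orP[/eqP -> // | zr].
case: (z =P v) => [-> // | /eqP zv]; rewrite inE; apply: contra nh => zX.
by apply/hasP; exists z; rewrite // /interior mem_filter /= zv.
Qed.

(* The path leaves the component of [u] in [T - uv] through an edge of
   [H[~: X]], which by the cut property is no lighter than [u v]. *)
Lemma MST_edge_no_light_path X T u v F r :
  is_MST w (~: X) T -> [set u; v] \in T -> {subset F <= Mk w k} ->
  (forall f, f \in F -> (w f < w [set u; v])%R) ->
  uv_path F u v r -> ~~ has (mem X) (interior v r) -> False.
Proof.
move=> HT eT FM light /and3P[pth /eqP lst un] nh.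
have [/spanning_treeP[H1 _ H3] _] := is_MSTP HT.
have [_ eX] := H1 _ eT.
have uX : u \in ~: X by apply: (subsetP eX); rewrite set21.
have vX : v \in ~: X by apply: (subsetP eX); rewrite set22.
set T0 := T :\ [set u; v].
have := uniq_path_exit (P := connect (adj T0) u) pth un (connect0 _ u).
rewrite lst => /(_ (H3 _ u v eT erefl)) [a [b [[abF Pa Pb ain bin] _]]].
have ab : a != b by apply: edge_neq; apply/Mk_edge/FM.
have avoid := path_vertices_avoid uX vX nh.
have nab : ~~ connect (adj T0) a b by apply: contra Pb; apply: connect_trans.
have := MST_edge_le_cut HT eT ab (avoid a ain) (avoid b _) nab.
have bur : b \in u :: r by rewrite inE bin orbT.
by move/(_ bur); rewrite leNgt light.
Qed.

Lemma Mk_k_constructible : k_constructible k (Mk w k).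
Proof.
have [_ winj] := wgood.
pose le e f := (w e <= w f)%R.
have le_total : total le by move=> e f; exact: le_total.
set s := sort le (enum (Mk w k)).
have sM : s =i Mk w k by move=> e; rewrite mem_sort mem_enum.
have us : uniq s by rewrite sort_uniq enum_uniq.
exists s; split=> //; split=> // i isz u v ei rs hrs; rewrite leqNgt; apply/negP => big.
have /bigcupP[X /eqP cX /bigcupP[T HT eT]] : nth set0 s i \in Mk w k by rewrite -sM mem_nth.
have [r rrs nh] : exists2 r, r \in rs & ~~ has (mem X) (interior v r).
  by apply: (disjoint_paths_avoid hrs); rewrite cX.
have [_ [/allP/(_ r rrs) ruv _]] := hrs.
apply: (MST_edge_no_light_path HT _ _ _ ruv nh); rewrite -?ei //.
- by move=> f; rewrite inE -sM => /mem_take.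
- have sinj : {in s &, injective w}.
    by move=> e f; rewrite !sM => /Mk_edge ? /Mk_edge ?; apply: winj.
  move=> f; rewrite inE; apply: sorted_take_lt => //.
  exact: sort_sorted.
Qed.

End MkConstructible.

Section Menger.
Variable V : finType.
Implicit Types (F G : {set {set V}}) (A B S X W Z T : {set V}).

Definition adj_avoid F S : rel V := fun a b => adj F a b && (a \notin S) && (b \notin S).

Definition separator F A B S : bool :=
  [forall a in A, forall b in B, (a \notin S) ==> ~~ connect (adj_avoid F S) a b].
Definition reach F A S : {set V} :=
  [set z | [exists a in A, (a \notin S) && connect (adj_avoid F S) a z]].

Definition adj_within F W : rel V := fun a b => adj F a b && (a \in W) && (b \in W).

Definition connected_within F W : bool :=
  [forall z in W, forall z' in W, connect (adj_within F W) z z'].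

Definition linkage F A B k (Ws : {set {set V}}) : Prop :=
  [/\ #|Ws| = k,
      (forall W1 W2, W1 \in Ws -> W2 \in Ws -> W1 != W2 -> [disjoint W1 & W2]) &
      (forall W, W \in Ws -> [/\ connected_within F W, exists a, a \in W /\ a \in A &
                                   exists b, b \in W /\ b \in B])].

Lemma separatorP F A B S : reflect
  (forall a b, a \in A -> b \in B -> a \notin S -> ~~ connect (adj_avoid F S) a b)
  (separator F A B S).
Proof.
apply: (iffP forallP) => [H a b aA bB aS | H a].
  by have /implyP/(_ aA)/forallP/(_ b)/implyP/(_ bB)/implyP/(_ aS) := H a.
apply/implyP => aA; apply/forallP => b; apply/implyP => bB; apply/implyP; exact: H.
Qed.

Lemma connected_withinP F W : reflect
  (forall z z', z \in W -> z' \in W -> connect (adj_within F W) z z')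
  (connected_within F W).
Proof.
apply: (iffP forallP) => [H z z' zW z'W | H z].
  by have /implyP/(_ zW)/forallP/(_ z')/implyP/(_ z'W) := H z.
apply/implyP => zW; apply/forallP => z'; apply/implyP; exact: H.
Qed.

Lemma reachP F A S z : reflect
  (exists a, [/\ a \in A, a \notin S & connect (adj_avoid F S) a z]) (z \in reach F A S).
Proof.
rewrite inE; apply: (iffP existsP) => [[a /andP[aA /andP[aS c]]] | [a [aA aS c]]].
  by exists a.
by exists a; rewrite aA aS c.
Qed.

Lemma adj_avoid_sym F S : symmetric (adj_avoid F S).
Proof.
move=> a b; rewrite /adj_avoid adj_sym.
by case: (a \in S); case: (b \in S); rewrite ?andbT ?andbF.
Qed.

Lemma connect_adj_avoid_sym F S : connect_sym (adj_avoid F S).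
Proof. exact: sym_connect_sym (adj_avoid_sym F S). Qed.

Lemma adj_within_sym F W : symmetric (adj_within F W).
Proof.
move=> a b; rewrite /adj_within adj_sym.
by case: (a \in W); case: (b \in W); rewrite ?andbT ?andbF.
Qed.

Lemma connect_adj_within_sym F W : connect_sym (adj_within F W).
Proof. exact: sym_connect_sym (adj_within_sym F W). Qed.

Lemma connect_avoid_notin F S a b : a \notin S -> connect (adj_avoid F S) a b -> b \notin S.
Proof.
by apply: (connect_stable (P := fun z => z \notin S)) => c d _ /andP[_ ->].
Qed.

Lemma connect_within_in F W a b : a \in W -> connect (adj_within F W) a b -> b \in W.
Proof.
by apply: (connect_stable (P := fun z => z \in W)) => c d _ /andP[_ ->].
Qed.

Lemma separator_sym F A B S : separator F A B S -> separator F B A S.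
Proof.
move/separatorP => H; apply/separatorP => b a bB aA bS; apply/negP => c.
have aS : a \notin S := connect_avoid_notin bS c.
by move/negP: (H a b aA bB aS); apply; rewrite connect_adj_avoid_sym.
Qed.

Lemma reach_notin F A S z : z \in reach F A S -> z \notin S.
Proof. by case/reachP => a [_ aS c]; apply: connect_avoid_notin aS c. Qed.

Lemma reach_separated F A B S z : separator F A B S -> z \in reach F A S -> z \notin B.
Proof.
move/separatorP => H /reachP[a [aA aS c]]; apply/negP => zB.
by move/negP: (H a z aA zB aS).
Qed.

Lemma reach_disjoint F A B S z : separator F A B S ->
  z \in reach F A S -> z \in reach F B S -> False.
Proof.
move/separatorP => H /reachP[a [aA aS ca]] /reachP[b [bB bS cb]].
move/negP: (H a b aA bB aS); apply; apply: connect_trans ca _; by rewrite connect_adj_avoid_sym.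
Qed.

Lemma reach_closed F A S a b : a \in reach F A S -> adj_avoid F S a b -> b \in reach F A S.
Proof.
case/reachP => a0 [a0A a0S c] h; apply/reachP; exists a0; split => //.
by apply: connect_trans c (connect1 h).
Qed.

Lemma adj_avoid_sub F F' S S' : F \subset F' -> S' \subset S ->
  subrel (adj_avoid F S) (adj_avoid F' S').
Proof.
move=> FF /subsetP SS a b /andP[/andP[h aS] bS]; rewrite /adj_avoid (adj_subset FF h) /=.
by apply/andP; split; [exact: contra (SS a) aS | exact: contra (SS b) bS].
Qed.

Lemma reach_sub F A S S' z : S \subset S' -> z \in reach F A S' -> z \in reach F A S.
Proof.
move=> SS /reachP[a [aA aS c]]; apply/reachP; exists a; split => //.
  by apply: contra aS; apply: (subsetP SS).
by apply: connect_subrel c; apply: adj_avoid_sub.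
Qed.

Lemma separator_closure F A B S (C : {set V}) :
  (forall a, a \in A -> a \notin S -> a \in C) -> (forall z, z \in C -> z \notin B) ->
  (forall z z', z \in C -> adj_avoid F S z z' -> z' \in C) -> separator F A B S.
Proof.
move=> HA HB HC; apply/separatorP => a b aA bB aS; apply/negP => c.
have := connect_stable (P := fun z => z \in C) HC (HA a aA aS) c.
by move/HB; rewrite bB.
Qed.

Lemma separator_setU1_edgel F' A B S x y : separator F' A B S ->
  separator ([set x; y] |: F') A B (x |: S).
Proof.
move/separatorP => H; apply/separatorP => a b aA bB; rewrite in_setU1 negb_or => /andP[ax aS].
apply: contra (H a b aA bB aS); apply: connect_subrel => c d /andP[/andP[h cS] dS].
move: cS dS; rewrite !in_setU1 !negb_or => /andP[cx cS] /andP[dx dS].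
rewrite /adj_avoid cS dS !andbT; move: h; rewrite /adj in_setU1 => /orP[/eqP E|] //.
have : x \in [set c; d] by rewrite E set21.
by rewrite !inE ![x == _]eq_sym (negbTE cx) (negbTE dx).
Qed.

Lemma separator_setU1_edger F' A B S x y : separator F' A B S ->
  separator ([set x; y] |: F') A B (y |: S).
Proof. by rewrite set2C; apply: separator_setU1_edgel. Qed.

Lemma separator_lift F' A B S x y Z : separator F' A B S -> y \notin reach F' A S ->
  separator F' A (x |: S) Z -> separator ([set x; y] |: F') A B Z.
Proof.
move=> sS yC /separatorP H3; apply/separatorP => a b aA bB aZ; apply/negP => cab.
case: (boolP (a \in x |: S)) => [axS | naxS].
  by move/negP: (H3 a a aA axS aZ); apply; apply: connect0.
pose K := [set z | connect (adj_avoid F' (Z :|: (x |: S))) a z].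
have aS : a \notin S by apply: contra naxS => h; rewrite in_setU1 h orbT.
have Kreach : forall z, z \in K -> z \in reach F' A S.
  move=> z; rewrite inE => c; apply/reachP; exists a; split => //.
  apply: connect_subrel c; apply: adj_avoid_sub => //.
  by apply/subsetP => t tS; rewrite !inE tS !orbT.
have aK : a \in K by rewrite inE connect0.
have bK : b \notin K by apply/negP => /Kreach /(reach_separated sS); rewrite bB.
move/connectP: cab => [p pth blast].
have bl : ~~ (fun t => t \in K) (last a p) by rewrite -blast.
have [z [z' [hzz' zK z'K]]] := path_exit (P := fun t => t \in K) pth aK bl.
have aZxS : a \notin Z :|: (x |: S) by rewrite in_setU negb_or aZ naxS.
have zn : z \notin Z :|: (x |: S) by move: zK; rewrite inE; apply: connect_avoid_notin.
have zy : z != y by apply: contraNneq yC => <-; apply: Kreach.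
have zx : z != x by apply: contra zn => /eqP ->; rewrite !inE eqxx !orbT.
move: hzz' => /andP[/andP[hadj zZ] z'Z].
have zF' : adj F' z z'.
  move: hadj; rewrite /adj in_setU1 => /orP[/eqP E|] //.
  have : z \in [set x; y] by rewrite -E set21.
  by rewrite !inE (negbTE zx) (negbTE zy).
have caz : connect (adj_avoid F' Z) a z.
  move: zK; rewrite inE; apply: connect_subrel; apply: adj_avoid_sub => //.
  exact: subsetUl.
case: (boolP (z' \in x |: S)) => z'xS.
  move/negP: (H3 a z' aA z'xS aZ); apply; apply: connect_trans caz (connect1 _).
  by rewrite /adj_avoid zF' zZ z'Z.
move/negP: z'K; apply; rewrite inE; move: zK; rewrite inE => zK.
apply: connect_trans zK (connect1 _).
by rewrite /adj_avoid zF' (negbTE zn) in_setU negb_or z'Z z'xS.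
Qed.

Lemma adj_within_sub F F' W W' : F \subset F' -> W \subset W' ->
  subrel (adj_within F W) (adj_within F' W').
Proof.
move=> FF /subsetP WW a b /andP[/andP[h aW] bW].
by rewrite /adj_within (adj_subset FF h) (WW _ aW) (WW _ bW).
Qed.

Lemma connected_within_subset F F' W : F \subset F' ->
  connected_within F W -> connected_within F' W.
Proof.
move=> FF /connected_withinP H; apply/connected_withinP => z z' zW z'W.
by apply: connect_subrel (H z z' zW z'W); apply: adj_within_sub.
Qed.

Lemma linkage_subset F F' A B k Ws : F \subset F' ->
  linkage F A B k Ws -> linkage F' A B k Ws.
Proof.
move=> FF' [c1 c2 c3]; split=> // W /c3[h1 h2 h3]; split=> //.
exact: connected_within_subset h1.
Qed.

Definition rooted_at F A T W t : bool :=
  [&& t \in W, connected_within F W, [exists a in W, a \in A] &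
      [forall z in W, (z != t) ==> (z \in reach F A T)]].

Lemma rooted_atP F A T W t : reflect
  [/\ t \in W, connected_within F W, exists2 a, a \in W & a \in A &
      forall z, z \in W -> z != t -> z \in reach F A T]
  (rooted_at F A T W t).
Proof.
apply: (iffP and4P) => [[tW cW /existsP[a /andP[aW aA]] /forallP H] | [tW cW [a aW aA] H]].
  by split=> // [|z zW]; [exists a | exact: implyP (implyP (H z) zW)].
split=> //; first by apply/existsP; exists a; rewrite aW.
by apply/forallP => z; apply/implyP => zW; apply/implyP; apply: H.
Qed.

(* Cut a connected set running from [A] to [T] at its first vertex in [T]. *)
Lemma trim_linked_set F A T W a : connected_within F W -> a \in W -> a \in A ->
  (exists2 t0, t0 \in W & t0 \in T) ->
  exists W' t, [/\ W' \subset W, t \in T & rooted_at F A T W' t].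
Proof.
move=> cW aW aA [t0 t0W t0T].
case: (boolP (a \in T)) => aT.
  exists [set a], a; split; rewrite ?sub1set //; apply/rooted_atP; split; rewrite ?set11 //.
  - by apply/connected_withinP => z z' /set1P -> /set1P ->; apply: connect0.
  - by exists a; rewrite ?set11.
  - by move=> z /set1P ->; rewrite eqxx.
pose U := W :\: T.
pose K := [set z | connect (adj_within F U) a z].
have KU z : z \in K -> z \in U by rewrite inE; apply: connect_within_in; rewrite inE aT aW.
have aK : a \in K by rewrite inE connect0.
have t0K : t0 \notin K by apply/negP => /KU; rewrite inE t0T.
move/connected_withinP: cW => /(_ a t0 aW t0W) /connectP[p pth plast].
have bl : ~~ (fun t => t \in K) (last a p) by rewrite -plast.
have [z [z' [/andP[/andP[hadj zW] z'W] zK z'K]]] :=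
  path_exit (P := fun t => t \in K) pth aK bl.
have z'T : z' \in T.
  apply: contraR z'K => nz'T /=; rewrite inE; move: (zK); rewrite inE => cz.
  apply: connect_trans cz (connect1 _).
  by rewrite /adj_within hadj (KU z zK) /U inE nz'T z'W.
have KW : K \subset W by apply/subsetP => c /KU; rewrite inE => /andP[].
have lift c1 c2 : [&& adj_within F U c1 c2, connect (adj_within F U) a c1
                    & connect (adj_within F U) a c2] -> adj_within F (z' |: K) c1 c2.
  by case/and3P => /andP[/andP[h _] _] h1 h2; rewrite /adj_within h !in_setU1 !inE h1 h2 !orbT.
have Kfrom c : c \in z' |: K -> connect (adj_within F (z' |: K)) a c.
  rewrite in_setU1 => /orP[/eqP -> | ]; last first.
    by rewrite inE => /connect_in_component; apply: connect_subrel.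
  have hz' : adj_within F (z' |: K) z z' by rewrite /adj_within hadj !in_setU1 eqxx zK !orbT.
  move: zK; rewrite inE => /connect_in_component zK.
  exact: connect_trans (connect_subrel lift zK) (connect1 hz').
exists (z' |: K), z'; split; rewrite ?subUset ?sub1set ?z'W //.
apply/rooted_atP; split; first by rewrite setU11.
- apply/connected_withinP => c c' cin c'in; apply: connect_trans (Kfrom c' c'in).
  by rewrite connect_adj_within_sym; apply: Kfrom.
- by exists a; rewrite // in_setU1 aK orbT.
- move=> c; rewrite in_setU1 => /orP[/eqP -> | cK]; first by rewrite eqxx.
  move=> _; apply/reachP; exists a; split => //.
  move: cK; rewrite inE; apply: connect_subrel => c1 c2 /andP[/andP[h h1] h2].
  by move: h1 h2; rewrite /adj_avoid h !inE => /andP[-> _] /andP[-> _].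
Qed.

Definition rooted_family F A T (P : V -> {set V}) : Prop :=
  (forall t, t \in T -> rooted_at F A T (P t) t) /\
  (forall t t', t \in T -> t' \in T -> t != t' -> [disjoint P t & P t']).

(* Distinct members get distinct roots, which therefore exhaust [T]. *)
Lemma trim_linkage F A T Ws : linkage F A T #|T| Ws -> exists P, rooted_family F A T P.
Proof.
case: (set_0Vmem T) => [-> | [d _]]; first by exists (fun=> set0); split=> t; rewrite inE.
case=> cWs disj good.
pose ok W (q : {set V} * V) := [&& q.1 \subset W, q.2 \in T & rooted_at F A T q.1 q.2].
have okW W : W \in Ws -> exists q, ok W q.
  move=> WW; have [cW [a [aW aA]] [b [bW bT]]] := good W WW.
  have [W' [t [h1 h2 h3]]] := trim_linked_set cW aW aA (ex_intro2 _ _ b bW bT).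
  by exists (W', t); apply/and3P.
pose g W := odflt (W, d) [pick q | ok W q].
have gP W : W \in Ws -> ok W (g W).
  move=> WW; rewrite /g; case: pickP => [q Hq | H] //=.
  by have [q Hq] := okW W WW; rewrite H in Hq.
have g_root W : W \in Ws -> (g W).2 \in W.
  move=> /gP /and3P[sub _ /and4P[rW _ _ _]]; exact: (subsetP sub).
have ginj : {in Ws &, injective (fun W => (g W).2)}.
  move=> W1 W2 W1in W2in /= E; apply/eqP; apply: contraT => ne.
  have := g_root W2 W2in; rewrite -E.
  by move/disjointP: (disj W1 W2 W1in W2in ne) => /(_ _ (g_root W1 W1in)).
pose I := [set (g W).2 | W in Ws].
have IT : I \subset T by apply/subsetP => t /imsetP[W /gP /and3P[_ ? _] ->].
have IE : I = T.
  by apply/eqP; rewrite eqEcard IT card_in_imset // cWs leqnn.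
pose Wof t := odflt set0 [pick W in Ws | (g W).2 == t].
have WofP t : t \in T -> Wof t \in Ws /\ (g (Wof t)).2 = t.
  rewrite -IE => /imsetP[W WW Et]; rewrite /Wof.
  case: pickP => [W' /andP[W'in /eqP E] | H] //=.
  by have := H W; rewrite WW Et eqxx.
exists (fun t => (g (Wof t)).1); split.
  by move=> t /WofP[/gP /and3P[_ _ h] Et]; rewrite Et in h.
move=> t t' /WofP[Win Et] /WofP[W'in Et'] ne.
have /and3P[s1 _ _] := gP _ Win; have /and3P[s2 _ _] := gP _ W'in.
apply: disjointW s1 s2 _; apply: disj => //.
by apply: contraNneq ne => E; rewrite -Et -Et' E.
Qed.

Lemma connected_withinU F W1 W2 z1 z2 :
  connected_within F W1 -> connected_within F W2 -> z1 \in W1 -> z2 \in W2 ->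
  connect (adj_within F (W1 :|: W2)) z1 z2 -> connected_within F (W1 :|: W2).
Proof.
move=> /connected_withinP c1 /connected_withinP c2 z1W z2W c12.
have from1 c : c \in W1 :|: W2 -> connect (adj_within F (W1 :|: W2)) z1 c.
  rewrite in_setU => /orP[cW | cW].
    by apply: connect_subrel (c1 _ _ z1W cW); apply: adj_within_sub => //; exact: subsetUl.
  apply: connect_trans c12 _; apply: connect_subrel (c2 _ _ z2W cW).
  by apply: adj_within_sub => //; exact: subsetUr.
apply/connected_withinP => c c' cin c'in; apply: connect_trans (from1 c' c'in).
by rewrite connect_adj_within_sym; apply: from1.
Qed.

Section MengerStep.
Variables (F' : {set {set V}}) (A B S : {set V}) (x y : V).
Hypotheses (sS : separator F' A B S) (xS : x \notin S) (yS : y \notin S) (xy : x != y).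
Hypotheses (yA : y \notin reach F' A S) (xB : x \notin reach F' B S).

Let F := [set x; y] |: F'.

(* The sides reachable from [A] and from [B] avoiding [S] are disjoint, so two
   rooted sets can only meet in a common root lying in [S]. *)
Lemma rooted_sets_meet P Q t t' z :
  rooted_family F' A (x |: S) P -> rooted_family F' B (y |: S) Q ->
  t \in x |: S -> t' \in y |: S -> z \in P t -> z \in Q t' -> [/\ z = t, z = t' & z \in S].
Proof.
move=> [hP _] [hQ _] tin t'in zP zQ.
have [_ _ _ rP] := rooted_atP _ _ _ _ _ (hP t tin).
have [_ _ _ rQ] := rooted_atP _ _ _ _ _ (hQ t' t'in).
have reachA z0 : z0 \in reach F' A (x |: S) -> z0 \in reach F' A S.
  exact: reach_sub (subsetUr _ _).
have reachB z0 : z0 \in reach F' B (y |: S) -> z0 \in reach F' B S.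
  exact: reach_sub (subsetUr _ _).
case: (z =P t) => [zt | /eqP zt]; case: (z =P t') => [zt' | /eqP zt'].
- split => //; move: tin; rewrite in_setU1 => /orP[/eqP tx | ]; last by rewrite zt.
  by move: t'in; rewrite -zt' zt tx in_setU1 (negbTE xS) orbF (negbTE xy).
- have := reachB _ (rQ z zQ zt'); move: tin; rewrite -zt in_setU1 => /orP[/eqP -> | zS].
    by rewrite (negbTE xB).
  by move/reach_notin; rewrite zS.
- have := reachA _ (rP z zP zt); move: t'in; rewrite -zt' in_setU1 => /orP[/eqP -> | zS].
    by rewrite (negbTE yA).
  by move/reach_notin; rewrite zS.
- by case: (reach_disjoint sS (reachA _ (rP z zP zt)) (reachB _ (rQ z zQ zt'))).
Qed.

(* Glue the set rooted at [t] on the [A] side to the one rooted at [t] on the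
   [B] side, using the edge [x y] to glue the set rooted at [x] to the one
   rooted at [y]. *)
Lemma linkage_of_rooted_families P Q :
  rooted_family F' A (x |: S) P -> rooted_family F' B (y |: S) Q ->
  exists Ws, linkage F A B #|x |: S| Ws.
Proof.
move=> hPf hQf; have [hP dP] := hPf; have [hQ dQ] := hQf.
pose sg t := if t == x then y else t.
have sgT t : t \in x |: S -> sg t \in y |: S.
  rewrite /sg !in_setU1; case: eqP => [_ _ | _ /= tS]; first by rewrite eqxx.
  by rewrite tS orbT.
have sgS t : t \in x |: S -> sg t \in S -> sg t = t.
  by rewrite /sg; case: eqP => // _ _; rewrite (negbTE yS).
have sginj : {in x |: S &, injective sg}.
  move=> t1 t2 t1in t2in; rewrite /sg.
  case: (t1 =P x) => [-> | _]; case: (t2 =P x) => [-> | _] // E.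
  - by move: t2in; rewrite in_setU1 -E eq_sym (negbTE xy) (negbTE yS).
  - by move: t1in; rewrite in_setU1 E eq_sym (negbTE xy) (negbTE yS).
pose Rt t := P t :|: Q (sg t).
have Rdisj t1 t2 : t1 \in x |: S -> t2 \in x |: S -> t1 != t2 -> [disjoint Rt t1 & Rt t2].
  move=> t1in t2in ne; apply/disjointP => z; rewrite !in_setU.
  case/orP=> [zP1|zQ1] /orP[zP2|zQ2].
  - by move/disjointP: (dP t1 t2 t1in t2in ne) => /(_ z zP1 zP2).
  - have [e1 e2 e3] := rooted_sets_meet hPf hQf t1in (sgT t2 t2in) zP1 zQ2.
    by rewrite -e1 e2 sgS -?e2 // eqxx in ne.
  - have [e1 e2 e3] := rooted_sets_meet hPf hQf t2in (sgT t1 t1in) zP2 zQ1.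
    by rewrite -e1 e2 sgS -?e2 // eqxx in ne.
  - have ne' : sg t1 != sg t2 by apply: contra ne => /eqP /sginj -> //.
    by move/disjointP: (dQ _ _ (sgT t1 t1in) (sgT t2 t2in) ne') => /(_ z zQ1 zQ2).
have tR t : t \in x |: S -> t \in Rt t.
  by move=> /hP /rooted_atP[h _ _ _]; rewrite in_setU h.
have FF' : F' \subset F by apply: subsetUr.
exists [set Rt t | t in x |: S]; split.
- rewrite card_in_imset // => t1 t2 t1in t2in E; apply/eqP; apply: contraT => ne.
  have z2 : t1 \in Rt t2 by rewrite -E; apply: tR.
  by move/disjointP: (Rdisj t1 t2 t1in t2in ne) => /(_ _ (tR t1 t1in) z2).
- move=> W1 W2 /imsetP[t1 t1in ->] /imsetP[t2 t2in ->] ne; apply: Rdisj => //.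
  by apply: contraNneq ne => ->.
move=> W /imsetP[t tin ->].
have /rooted_atP[hPt cP [a aP aA] _] := hP t tin.
have /rooted_atP[hQt cQ [b bQ bB] _] := hQ (sg t) (sgT t tin).
split; [ | by exists a; rewrite in_setU aP | by exists b; rewrite in_setU bQ orbT].
apply: (connected_withinU (connected_within_subset FF' cP)
          (connected_within_subset FF' cQ) hPt hQt).
rewrite /sg; case: (t =P x) => [E | _]; last by apply: connect0.
have eF : adj F x y by rewrite /adj /F setU11.
apply: connect1; rewrite /adj_within E eF !in_setU.
by move: hPt hQt; rewrite /sg E eqxx => -> ->; rewrite orbT.
Qed.

(* Induction step of Menger's theorem when [F' + x y] has no small separator but
   [F'] has one, [S], with [x] on the [A] side and [y] on the [B] side. *)
Lemma menger_step k
  (IH : forall A' B', (forall Z, separator F' A' B' Z -> k <= #|Z|) ->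
          exists Ws, linkage F' A' B' k Ws)
  (hsep : forall Z, separator F A B Z -> k <= #|Z|) :
  #|S|.+1 = k -> exists Ws, linkage F A B k Ws.
Proof.
move=> cS.
have cxS : #|x |: S| = k by rewrite cardsU1 xS.
have cyS : #|y |: S| = k by rewrite cardsU1 yS.
have [WsP gP] : exists Ws, linkage F' A (x |: S) #|x |: S| Ws.
  by rewrite cxS; apply: IH => Z hZ; apply: hsep; exact: separator_lift sS yA hZ.
have [WsQ gQ] : exists Ws, linkage F' B (y |: S) #|y |: S| Ws.
  rewrite cyS; apply: IH => Z hZ; apply: hsep; apply: separator_sym.
  rewrite /F set2C; exact: separator_lift (separator_sym sS) xB hZ.
have [P hP] := trim_linkage gP; have [Q hQ] := trim_linkage gQ.
by rewrite -cxS; apply: linkage_of_rooted_families hP hQ.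
Qed.

End MengerStep.

Lemma separator_setU1_edge_reach F' A B S x y : separator F' A B S ->
  ~~ separator ([set x; y] |: F') A B S ->
  (x \in reach F' A S) != (y \in reach F' A S).
Proof.
move=> sS nsS; apply: contra nsS => /eqP xyA.
have Asub a : a \in A -> a \notin S -> a \in reach F' A S.
  by move=> aA aS; apply/reachP; exists a; split => //; apply: connect0.
apply: (separator_closure Asub (fun z => reach_separated sS)) => z z' zC.
case/andP=> /andP[]; rewrite /adj in_setU1 => /orP[/eqP E | h] zS z'S; last first.
  by apply: reach_closed zC _; rewrite /adj_avoid /adj h zS z'S.
have : z \in [set x; y] by rewrite -E set21.
have : z' \in [set x; y] by rewrite -E set22.
by case/set2P=> -> /set2P[] zE; move: zC; rewrite zE // xyA.
Qed.

Lemma exists_card_between (X0 Y : {set V}) m : X0 \subset Y -> #|X0| <= m <= #|Y| ->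
  exists X, [/\ X0 \subset X, X \subset Y & #|X| = m].
Proof.
move=> sub /andP[h1 h2]; move: {2}(m - #|X0|) (erefl (m - #|X0|)) => d.
elim: d X0 sub h1 => [|d IH] X0 sub h1 hd.
  by exists X0; split => //; apply/eqP; rewrite eqn_leq h1 -subn_eq0 hd.
have lt : #|X0| < #|Y| by lia.
have [z /andP[zX0 zY]] : exists z, (z \notin X0) && (z \in Y).
  apply/existsP; apply: contraTT lt => /existsPn H; rewrite -leqNgt.
  by apply: subset_leq_card; apply/subsetP => z zY; have := H z; rewrite zY andbT negbK.
have a1 : z |: X0 \subset Y by rewrite subUset sub1set zY sub.
have a2 : #|z |: X0| <= m by rewrite cardsU1 zX0; lia.
have a3 : m - #|z |: X0| = d by rewrite cardsU1 zX0; lia.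
have [X [s1 s2 c]] := IH (z |: X0) a1 a2 a3.
by exists X; split => //; apply: subset_trans s1; apply: subsetUr.
Qed.

Lemma menger_edgeless A B k : (forall S, separator set0 A B S -> k <= #|S|) ->
  exists Ws, linkage set0 A B k Ws.
Proof.
move=> hS.
have sAB : separator set0 A B (A :&: B).
  apply/separatorP => a b aA bB aS; apply/negP => c.
  have iso w : ~~ adj_avoid set0 (A :&: B) a w by rewrite /adj_avoid /adj inE.
  by have ba := connect_isolated iso c; subst b; rewrite inE aA bB in aS.
have hk : #|@set0 V| <= k <= #|A :&: B| by rewrite cards0 (hS _ sAB).
have [Y [_ YAB cY]] := exists_card_between (sub0set (A :&: B)) hk.
exists [set [set z] | z in Y]; split.
- by rewrite card_in_imset // => z1 z2 _ _; apply: set1_inj.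
- move=> W1 W2 /imsetP[z1 _ ->] /imsetP[z2 _ ->] ne.
  by apply/disjointP => z /set1P -> /set1P E; rewrite E eqxx in ne.
- move=> W /imsetP[z zY ->]; have := subsetP YAB z zY; rewrite inE => /andP[zA zB].
  split; [ | by exists z; rewrite set11 | by exists z; rewrite set11].
  by apply/connected_withinP => c c' /set1P -> /set1P ->; apply: connect0.
Qed.

Theorem menger F A B k : simple_graph F ->
  (forall S, separator F A B S -> k <= #|S|) -> exists Ws, linkage F A B k Ws.
Proof.
move: {2}#|F| (leqnn #|F|) => n; elim: n F A B => [|n IH] F A B cF sF hS.
  by move: cF hS; rewrite leqn0 cards_eq0 => /eqP->; apply: menger_edgeless.
case: (set_0Vmem F) => [F0 | [e eF]]; first by rewrite F0 in hS *; exact: menger_edgeless.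
have [x [y [xy eE]]] : exists x y, x != y /\ e = [set x; y].
  by apply/cards2P; exact: (implyP (forallP sF e) eF).
set F' := F :\ e.
have cF' : #|F'| <= n by move: cF; rewrite (cardsD1 e F) eF.
have sF' : simple_graph F'.
  by apply/forallP => f; apply/implyP => /setD1P[_ fF]; exact: (implyP (forallP sF f) fF).
have IH' A' B' := IH F' A' B' cF' sF'.
have FE : F = [set x; y] |: F' by rewrite /F' -eE setD1K.
case: (boolP [exists S : {set V}, separator F' A B S && (#|S| < k)]) =>
  [/existsP[S /andP[sS cS]] | /existsPn hn]; last first.
  have [Ws linked] : exists Ws, linkage F' A B k Ws.
    by apply: IH' => Z hZ; have := hn Z; rewrite hZ /= -leqNgt.
  by exists Ws; apply: linkage_subset linked; apply: subD1set.
rewrite FE in hS *.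
have hx := hS _ (separator_setU1_edgel x y sS); rewrite cardsU1 in hx.
have hy := hS _ (separator_setU1_edger x y sS); rewrite cardsU1 in hy.
have xS : x \notin S by move: hx cS; case: (x \in S) => /=; lia.
have yS : y \notin S by move: hy cS; case: (y \in S) => /=; lia.
have cSk : #|S|.+1 = k by move: hx cS; rewrite xS /=; lia.
have xyR : (x \in reach F' A S) != (y \in reach F' A S).
  by apply: separator_setU1_edge_reach sS _; apply: contraTN cS => /hS; rewrite -leqNgt.
case: (boolP (y \in reach F' A S)) => yA.
  have xA : x \notin reach F' A S by move: xyR; rewrite yA; case: (x \in _).
  have yB : y \notin reach F' B S by apply/negP; apply: reach_disjoint sS yA.
  rewrite set2C in hS *; rewrite eq_sym in xy.
  exact: (menger_step sS yS xS xy xA yB IH' hS cSk).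
have xA : x \in reach F' A S by move: xyR; rewrite (negbTE yA); case: (x \in _).
have xB : x \notin reach F' B S by apply/negP; apply: reach_disjoint sS xA.
exact: (menger_step sS xS yS xy yA xB IH' hS cSk).
Qed.

Lemma paths_of_disjoint_sets (Q : seq V -> bool) (I : seq V -> seq V) (l : seq {set V}) :
  uniq l -> (forall W1 W2, W1 \in l -> W2 \in l -> W1 != W2 -> [disjoint W1 & W2]) ->
  (forall W, W \in l -> exists r, [/\ Q r, (exists z, z \in I r) & {subset I r <= W}]) ->
  exists rs, [/\ size rs = size l, all Q rs, uniq rs &
     pairwise (fun r1 r2 => [disjoint I r1 & I r2]) rs] /\
     (forall r, r \in rs -> exists2 W, W \in l & {subset I r <= W}).
Proof.
elim: l => [|W l IH] /=; first by move=> _ _ _; exists [::]; split.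
case/andP => Wl ul disj hr.
have sub : {subset l <= W :: l} by move=> W' W'l; rewrite inE W'l orbT.
have [rs [[c1 c2 c3 c4] c5]] := IH ul
  (fun W1 W2 W1l W2l => disj W1 W2 (sub _ W1l) (sub _ W2l))
  (fun W' W'l => hr W' (sub _ W'l)).
have [r [Qr [z zr] rW]] := hr W (mem_head _ _).
have dr r' : r' \in rs -> [disjoint I r & I r'].
  move=> r'rs; have [W' W'l r'W'] := c5 r' r'rs.
  have WW' : W != W' by apply: contraNneq Wl => ->.
  apply/disjointP => t t1 t2.
  have := disj W W' (mem_head _ _) (sub _ W'l) WW'.
  by move/disjointP => /(_ t (rW t t1) (r'W' t t2)).
exists (r :: rs); split; first split => //=.
- by rewrite c1.
- by rewrite Qr.
- by rewrite c3 andbT; apply/negP => /dr /disjointP /(_ z zr zr).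
- by rewrite c4 andbT; apply/allP.
move=> r'; rewrite inE => /orP[/eqP -> | r'rs]; first by exists W; rewrite ?mem_head.
by have [W' W'l h] := c5 r' r'rs; exists W' => //; apply: sub.
Qed.

Section NonAdjacent.
Variables (F : {set {set V}}) (u v : V).
Hypotheses (sF : simple_graph F) (uv : u != v) (uvF : [set u; v] \notin F).

(* Menger's theorem is applied to the graph [F - u - v] between the
   neighbourhoods of [u] and [v]. *)
Let G := [set f in F | (u \notin f) && (v \notin f)].
Let Nu := [set a | adj F u a].
Let Nv := [set b | adj F v b].

Lemma adj_G c d : adj G c d -> [/\ adj F c d, c != u, c != v, d != u & d != v].
Proof.
rewrite /adj inE => /and3P[h hu hv]; split => //;
  [apply: contraNneq hu => <- | apply: contraNneq hv => <- |
   apply: contraNneq hu => <- | apply: contraNneq hv => <-]; by rewrite !inE eqxx ?orbT.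
Qed.

Lemma separator_G_blocks S : separator G Nu Nv S ->
  ~~ connect (adj_avoid F (S :\: [set u; v])) u v.
Proof.
move=> sS; apply/negP => /connect_uniq_path [p [pth un lastp]].
case: p pth un lastp => [|z1 q] /=; first by move=> _ _ E; move: uv; rewrite E eqxx.
case/andP => /andP[/andP[uz1 _] z1S] pth un lastp.
case/lastP: q pth un lastp => [|q' z] /=.
  by move=> _ _ E; move: uvF uz1; rewrite -E /adj => /negbTE->.
rewrite last_rcons => pth un E; subst z.
move: pth; rewrite rcons_path => /andP[pth /andP[/andP[bv _] _]].
move: un => /and3P[h1 h2 h3].
have uq : u \notin z1 :: q'.
  by apply: contra h1; rewrite !inE mem_rcons inE => /orP[->|->]; rewrite ?orbT.
have vq : v \notin z1 :: q'.
  rewrite inE negb_or; apply/andP; split.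
    by apply: contra h2 => /eqP <-; rewrite mem_rcons mem_head.
  by move: h3; rewrite rcons_uniq => /andP[].
have inner : all (fun z => (z != u) && (z != v)) (z1 :: q').
  by apply/allP => z zq; apply/andP; split;
    [apply: contraNneq uq => <- | apply: contraNneq vq => <-].
have notS c : c != u -> c != v -> c \notin S :\: [set u; v] -> c \notin S.
  by move=> cu cv; apply: contra => cS; rewrite in_setD cS !inE negb_or cu cv.
have pth' : path (adj_avoid G S) z1 q'.
  apply: (sub_in_path _ inner pth) => c d /andP[cu cv] /andP[du dv] /andP[/andP[h cX] dX].
  rewrite /adj_avoid (notS c) // (notS d) // !andbT /adj inE; rewrite /adj in h.
  by rewrite h /= !inE !negb_or ![u == _]eq_sym ![v == _]eq_sym cu du cv dv.
have /andP[z1u z1v] := allP inner z1 (mem_head _ _).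
have z1A : z1 \in Nu by rewrite inE.
have bB : last z1 q' \in Nv by rewrite inE adj_sym.
move/separatorP: sS => /(_ _ _ z1A bB (notS _ z1u z1v z1S)) /negP; apply.
by apply/connectP; exists q'.
Qed.

Lemma linked_set_G_path W : connected_within G W ->
  (exists a, a \in W /\ a \in Nu) -> (exists b, b \in W /\ b \in Nv) ->
  exists r, [/\ uv_path F u v r, (exists z, z \in interior v r) &
                {subset interior v r <= W}].
Proof.
move=> cW [a [aW aA]] [b [bW bB]].
have [p [pth un lastp]] := connect_uniq_path ((connected_withinP _ _ cW) a b aW bW).
have pW z : z \in a :: p -> z \in W.
  by move=> zp; apply: connect_within_in aW (path_connect pth zp).
have puv z : z \in a :: p -> z != u /\ z != v.
  rewrite inE => /orP[/eqP -> | zp]; last first.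
    by have [c /andP[/andP[/adj_G[]]]] := path_has_pred pth zp.
  move: aA; rewrite inE => h; split.
    by rewrite eq_sym; apply: edge_neq; exact: (implyP (forallP sF _) h).
  by apply: contraNneq uvF => E; rewrite -E.
have pF : path (adj F) a p.
  by apply: sub_path pth => c d /andP[/andP[/adj_G[]]].
have nv : v \notin a :: p by apply/negP => /puv [_]; rewrite eqxx.
have nu : u \notin a :: p by apply/negP => /puv []; rewrite eqxx.
have int : interior v (a :: rcons p v) = a :: p.
  rewrite /interior -rcons_cons filter_rcons.
  have -> : predC1 v v = false by rewrite /= eqxx.
  by apply/all_filterP/allP => z zp /=; have [] := puv z zp.
exists (a :: rcons p v); rewrite int; split.
- apply/and3P; split.
  + rewrite /= rcons_path pF lastp; move: aA bB; rewrite !inE => -> bB /=.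
    by rewrite adj_sym.
  + by rewrite /= last_rcons.
  + by rewrite -rcons_cons cons_uniq rcons_uniq mem_rcons in_cons negb_or uv nu nv un.
- by exists a; rewrite mem_head.
- exact: pW.
Qed.

Theorem menger_nonadjacent m : at_most_disjoint_paths F u v m ->
  exists X : {set V},
    [/\ u \notin X, v \notin X, #|X| <= m & ~~ connect (adj_avoid F X) u v].
Proof.
move=> hat.
case: (boolP [exists S : {set V}, separator G Nu Nv S && (#|S| <= m)]) =>
  [/existsP[S /andP[sS cS]] | /existsPn hn].
  exists (S :\: [set u; v]); split; rewrite ?inE ?eqxx ?orbT //.
    by apply: leq_trans (subset_leq_card (subsetDl S _)) cS.
  exact: separator_G_blocks.
have sG : simple_graph G.
  apply/forallP => f; rewrite inE; apply/implyP => /andP[fF _].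
  exact: (implyP (forallP sF f) fF).
have [Ws [cWs disj good]] : exists Ws, linkage G Nu Nv m.+1 Ws.
  by apply: menger => // S hS; have := hn S; rewrite hS /= -ltnNge.
have [rs [[s1 s2 s3 s4] _]] : exists rs, [/\ size rs = size (enum Ws), all (uv_path F u v) rs,
    uniq rs & pairwise (fun r1 r2 => [disjoint interior v r1 & interior v r2]) rs] /\
    (forall r, r \in rs -> exists2 W, W \in enum Ws & {subset interior v r <= W}).
  apply: paths_of_disjoint_sets (enum_uniq _) _ _.
    by move=> W1 W2; rewrite !mem_enum; apply: disj.
  by move=> W; rewrite mem_enum => /good[]; apply: linked_set_G_path.
have := hat rs (conj s3 (conj s2 s4)).
by rewrite s1 -cardE cWs ltnn.
Qed.

End NonAdjacent.

End Menger.

Section ConstructibleInMk.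
Variable V : finType.
Variable R : realFieldType.
Implicit Types (F T : {set {set V}}) (X : {set V}).

(* Otherwise the tree path from [u] to [v] leaves the [F]-component of [u]
   through an edge outside [F], and swapping it for [u v] would decrease the
   weight. *)
Lemma MST_separated_edge (w : {set V} -> R) F X T u v :
  is_MST w (~: X) T -> u \in ~: X -> v \in ~: X -> u != v ->
  (forall f, f \notin F -> f != [set u; v] -> (w [set u; v] < w f)%R) ->
  ~~ connect (adj_avoid F X) u v -> [set u; v] \in T.
Proof.
move=> HT uX vX uv heavy nuv; apply: contraT => uvT.
have [st _] := is_MSTP HT; have [H1 H2 _] := (spanning_treeP _ _).1 st.
have [p [pth un lastp]] := connect_uniq_path (H2 u v uX vX).
have := uniq_path_exit (P := connect (adj_avoid F X) u) pth un (connect0 _ u).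
rewrite lastp => /(_ nuv) [a [b [[abT Pa Pb _ _] [q1 [q2 [[h1 h2 h3] [h4 h5 h6]]]]]]].
have [ab abX] : a != b /\ [set a; b] \subset ~: X.
  by have [/edge_neq] := H1 _ abT.
have aX : a \in ~: X by apply: (subsetP abX); rewrite set21.
have bX : b \in ~: X by apply: (subsetP abX); rewrite set22.
have abF : [set a; b] \notin F.
  apply: contra Pb => abF; apply: connect_trans Pa (connect1 _).
  by move: aX bX; rewrite /adj_avoid /adj abF !inE => -> ->.
have abuv : [set a; b] != [set u; v] by apply: contraNneq uvT => <-.
have bridge : ~~ connect (adj (T :\ [set a; b])) u v.
  by apply: spanning_tree_path_bridge st abT h1 h2 h3 h4 _ h6; rewrite h5.
by have := MST_edge_le_cut HT abT uv uX vX bridge; rewrite leNgt heavy.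
Qed.

(* Edges of the construction sequence [s] are weighted by their position, all
   other pairs come after them in some fixed order. *)
Definition position_weight (s : seq {set V}) (e : {set V}) : R :=
  if e \in s then ((index e s).+1%:R)%R else ((size s + 1 + enum_rank e)%N%:R)%R.

Lemma position_weight_good s : good_weights (position_weight s).
Proof.
split=> [e _ | e f _ _].
  by rewrite /position_weight; case: ifP; rewrite ltr0n // addnAC addn1.
rewrite /position_weight; case: ifP => es; case: ifP => fs /eqP; rewrite eqr_nat => /eqP h.
- by rewrite -(nth_index set0 es) -(nth_index set0 fs); case: h => ->.
- have hi : index e s < size s by rewrite index_mem.
  clear -h hi; lia.
- have hi : index f s < size s by rewrite index_mem.
  clear -h hi; lia.
- by apply: enum_rank_inj; apply: val_inj; move/addnI: h.
Qed.

Lemma position_weight_lt s e f : e \in s -> f \notin take (index e s) s -> f != e ->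
  (position_weight s e < position_weight s f)%R.
Proof.
move=> es fi fe; rewrite /position_weight es; case: ifP => fs; last first.
  rewrite ltr_nat -index_mem in es *; apply: leq_trans (leq_addr _ _).
  by rewrite addn1 !ltnS.
rewrite ltr_nat ltnS ltn_neqAle; apply/andP; split.
  by apply: contra fe => /eqP/(congr1 (nth set0 s)); rewrite !nth_index // => ->.
rewrite leqNgt; apply: contra fi => fe_lt.
by rewrite -(nth_index set0 fs) -(nth_take set0 fe_lt) mem_nth // size_takel // index_size.
Qed.

Lemma index_notin_take (s : seq {set V}) e : e \notin take (index e s) s.
Proof.
apply/negP => h.
have jl : index e (take (index e s) s) < find (pred1 e) s.
  rewrite -index_mem in h; apply: leq_trans h _.
  by rewrite size_take; case: ltnP.
have := @before_find _ set0 (pred1 e) s _ jl.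
by rewrite -(nth_take set0 jl) nth_index //= eqxx.
Qed.

Lemma constructible_sub_Mk (E : {set {set V}}) k : simple_graph E ->
  1 <= k <= #|V|.-1 -> k_constructible k E ->
  exists w : {set V} -> R, good_weights w /\ E \subset Mk w k.
Proof.
move=> sE /andP[k1 kn] [s [suniq [sE' hs]]].
exists (position_weight s); split; first exact: position_weight_good.
apply/subsetP => e eE; have es : e \in s by rewrite sE'.
have /cards2P[u [v [uv eE2]]] := implyP (forallP sE e) eE.
pose Fi := [set x in take (index e s) s].
have sFi : simple_graph Fi.
  apply/forallP => f; apply/implyP; rewrite inE => /mem_take; rewrite sE' => fE.
  exact: (implyP (forallP sE f) fE).
have eFi : [set u; v] \notin Fi by rewrite inE -eE2 index_notin_take.
have := hs (index e s) _ u v; rewrite index_mem es; rewrite nth_index // => /(_ isT eE2).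
case/(menger_nonadjacent sFi uv eFi) => X0 [uX0 vX0 cX0 nc].
have X0sub : X0 \subset ~: [set u; v].
  by apply/subsetP => z zX0; rewrite !inE negb_or; apply/andP; split;
    apply: contraTneq zX0 => ->.
have hk : #|X0| <= k.-1 <= #|~: [set u; v]|.
  by have := cardsC [set u; v]; rewrite cards2 uv; lia.
have [X [X0X XY cX]] := exists_card_between X0sub hk.
have uX : u \in ~: X by rewrite inE; apply/negP => /(subsetP XY); rewrite !inE eqxx.
have vX : v \in ~: X by rewrite inE; apply/negP => /(subsetP XY); rewrite !inE eqxx orbT.
have [T HT] := MST_exists (position_weight s) uX.
apply/bigcupP; exists X; first by rewrite cX.
apply/bigcupP; exists T => //; rewrite eE2.
apply: (MST_separated_edge (F := Fi) HT uX vX uv).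
  move=> f fFi fe; rewrite -eE2 in fe *; apply: position_weight_lt => //.
  by apply: contra fFi => h; rewrite inE.
apply: contra nc; apply: connect_subrel; exact: adj_avoid_sub.
Qed.

End ConstructibleInMk.

Theorem theorem5 (R : realFieldType) (V : finType) :
  (forall (w : {set V} -> R) (k : nat),
      2 <= #|V| -> good_weights w -> 1 <= k <= #|V|.-1 ->
      k_constructible k (Mk w k)) /\
  (forall (E : {set {set V}}) (k : nat),
      simple_graph E -> 1 <= k <= #|V|.-1 ->
      k_constructible k E ->
      exists w : {set V} -> R, good_weights w /\ E \subset Mk w k).
Proof.
split=> [w k _ wgood _ | E k]; first exact: Mk_k_constructible.
exact: constructible_sub_Mk.
Qed.
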